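(* Let $1\le t\le n$. If $S\subseteq N$ is an equivalence class with respect to connectedness within some $t$-switchable subset of $N$, then the ideal $\tilde{\mathcal{I}}^{\langle t\rangle}_S=(f_{i,a,b}: i\in[t],\ a,b\text{ connected in } S)$ of $R$ is prime.
   Context: Fix positive integers $n, r_1,\dots,r_n$, let $N=[r_1]\times\cdots\times[r_n]$, and let $R$ be the polynomial ring over a field in the variables $x_a$, $a\in N$. For $a,b\in N$ and $i\in[n]$, ${\rm s}(i,a,b)\in N$ has $i$-th component $b_i$ and other components equal to those of $a$. Let $d(a,b)=\#\{j: a_j\neq b_j\}$ and $f_{i,a,b}=x_ax_b-x_{{\rm s}(i,a,b)}x_{{\rm s}(i,b,a)}$. A subset $T\subseteq N$ is $t$-switchable if for all $a,b\in T$ with $d(a,b)=2$ and all $i\in[t]$, ${\rm s}(i,a,b)\in T$. Elements $a,b$ of a subset $T$ are connected in $T$ if there are $a_0=a,\dots,a_k=b$ in $T$ with $d(a_{j-1},a_j)\le 1$ for all $j$; this is an equivalence relation on $T$. *)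

From HB Require Import structures.
From mathcomp Require Import all_boot all_algebra.
From mathcomp Require Import mpoly.
Set Implicit Arguments. Unset Strict Implicit. Unset Printing Implicit Defensive.
Import GRing.Theory.
Local Open Scope ring_scope.

(* N = [r_1] x ... x [r_n], coordinates zero-based: component i lies in 'I_(r i). *)
Definition Ngrid (n : nat) (r : 'I_n -> nat) : finType :=
  {dffun forall i : 'I_n, 'I_(r i)}.

Section Grid.
Variables (n : nat) (r : 'I_n -> nat).
Local Notation N := (Ngrid r).

Definition sw (i : 'I_n) (a b : N) : N :=
  [ffun j => if j == i then b j else a j].

Definition dist (a b : N) : nat := #|[set j | a j != b j]|.

Definition switchable (t : nat) (T : {set N}) : Prop :=
  forall a b, a \in T -> b \in T -> dist a b = 2 ->
    forall i : 'I_n, (i < t)%N -> sw i a b \in T.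

Definition adjT (T : {set N}) : rel N :=
  fun x y => [&& x \in T, y \in T & (dist x y <= 1)%N].

Definition connectedIn (T : {set N}) (a b : N) : bool :=
  [&& a \in T, b \in T & connect (adjT T) a b].

Definition conn_class (T S : {set N}) : Prop :=
  exists2 a, a \in T & S = [set b | connectedIn T a b].

Variable K : fieldType.
Definition Rpoly := {mpoly K[#|{: N}|]}.
Definition xv (a : N) : Rpoly := 'X_(enum_rank a).

Definition fgen (i : 'I_n) (a b : N) : Rpoly :=
  xv a * xv b - xv (sw i a b) * xv (sw i b a).
End Grid.

Definition in_ideal (A : comNzRingType) (G : A -> Prop) (p : A) : Prop :=
  exists s : seq (A * A), (forall x, x \in s -> G x.2) /\
    p = \sum_(x <- s) x.1 * x.2.

Definition prime_ideal (A : comNzRingType) (I : A -> Prop) : Prop :=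
  ~ I 1 /\ forall p q, I (p * q) -> I p \/ I q.

Definition gensIS (K : fieldType) (n : nat) (r : 'I_n -> nat) (t : nat)
  (S : {set Ngrid r}) (p : Rpoly r K) : Prop :=
  exists i : 'I_n, exists a b : Ngrid r,
    [/\ (i < t)%N, connectedIn S a b & p = fgen K i a b].

(* The ideal is the kernel of the monomial map sending [x_a], for [a] in [S],
   to [z_(a beyond t) * prod_(i < t) y_(i, a_i)] and every other [x_a] to a fresh
   variable [u_a]; a kernel of a ring map into a domain is prime.  That kernel is
   spanned by the binomials [x^m - x^m'] with equal images, and these lie in the
   ideal by induction on the degree: if [x_a] divides [x^m], then [x^m'] can be
   rewritten modulo the ideal, replacing [x_b x_c] by [x_s(i,b,c) x_s(i,c,b)],
   until [x_a] divides it.  This needs [S] to be closed under the switches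
   [s(i, -, -)] with [i < t], which follows from the [t]-switchability of [T]
   by walking along the paths that connect points of [S]. *)

From HB Require Import structures.
From mathcomp Require Import all_boot all_algebra.
From mathcomp Require Import mpoly.
Set Implicit Arguments. Unset Strict Implicit. Unset Printing Implicit Defensive.
Import GRing.Theory.
Local Open Scope ring_scope.

Section InIdeal.
Variables (A : comNzRingType) (G : A -> Prop).

Lemma in_ideal0 : in_ideal G 0.
Proof. by exists [::]; rewrite big_nil. Qed.

Lemma in_ideal_gen x : G x -> in_ideal G x.
Proof.
move=> Gx; exists [:: (1, x)]; rewrite big_seq1 mul1r; split=> // y.
by rewrite inE => /eqP ->.
Qed.

Lemma in_idealD p q : in_ideal G p -> in_ideal G q -> in_ideal G (p + q).
Proof.
move=> [s1 [G1 ->]] [s2 [G2 ->]]; exists (s1 ++ s2); rewrite big_cat.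
by split=> // x; rewrite mem_cat => /orP[/G1|/G2].
Qed.

Lemma in_idealMl c p : in_ideal G p -> in_ideal G (c * p).
Proof.
move=> [s [Gs ->]]; exists [seq (c * x.1, x.2) | x <- s]; split.
  by move=> x /mapP[y ys ->]; exact: Gs ys.
by rewrite big_map mulr_sumr; apply: eq_bigr => x _; rewrite mulrA.
Qed.

Lemma in_idealB p q : in_ideal G p -> in_ideal G q -> in_ideal G (p - q).
Proof. by move=> Ip Iq; rewrite -mulN1r; apply/in_idealD => //; apply/in_idealMl. Qed.

End InIdeal.

Lemma kernel_prime_ideal (A : comNzRingType) (B : idomainType)
    (f : {rmorphism A -> B}) (I : A -> Prop) :
  (forall p, I p <-> f p = 0) -> prime_ideal I.
Proof.
move=> kerI; split; first by move/kerI/eqP; rewrite rmorph1 oner_eq0.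
move=> p q /kerI/eqP; rewrite rmorphM mulf_eq0.
by case/orP => /eqP/kerI; [left|right].
Qed.

Lemma mnm_neq0_gt0 k (m : 'X_{1..k}) : m != 0%MM -> exists j, (0 < m j)%N.
Proof.
move=> m0; apply/existsP; apply: contraR m0 => /existsPn m0.
by apply/eqP/mnmP => j; rewrite mnm0E; apply/eqP; rewrite -leqn0 leqNgt m0.
Qed.

Section MonomialMap.
Variables (R : comNzRingType) (k l : nat) (e : 'I_k -> 'X_{1..l}).
Implicit Types m : 'X_{1..k}.

Definition mlin m : 'X_{1..l} := (\sum_(j < k) e j *+ m j)%MM.

Lemma mlinE m u : mlin m u = (\sum_(j < k) e j u * m j)%N.
Proof. by rewrite mnm_sumE; apply: eq_bigr => j _; rewrite mulmnE. Qed.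

Lemma mlinD m1 m2 : mlin (m1 + m2)%MM = (mlin m1 + mlin m2)%MM.
Proof.
apply/mnmP => u; rewrite mnmDE !mlinE -big_split.
by apply: eq_bigr => j _; rewrite mnmDE mulnDr.
Qed.

Lemma mlin0 : mlin 0%MM = 0%MM.
Proof. by apply/mnmP => u; rewrite mlinE mnm0E big1 // => j _; rewrite mnm0E muln0. Qed.

Lemma mlinU j : mlin U_(j)%MM = e j.
Proof.
apply/mnmP => u; rewrite mlinE (bigD1 j) //= big1 => [|i ij].
  by rewrite mnm1E eqxx muln1 addn0.
by rewrite mnm1E eq_sym (negbTE ij) muln0.
Qed.

Lemma leq_mlin m j u : (e j u * m j <= mlin m u)%N.
Proof. by rewrite mlinE (bigD1 j) //= leq_addr. Qed.

Lemma mlin_gt0 m u : (0 < mlin m u)%N -> exists2 j, (0 < m j)%N & (0 < e j u)%N.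
Proof.
rewrite mlinE; case: (pickP (fun j => (0 < m j) && (0 < e j u))%N) => [j /andP[]|none].
  by exists j.
rewrite big1 // => j _; move: (none j) => /=.
by case: (e j u) => [|?]; case: (m j) => [|?]; rewrite ?muln0.
Qed.

Definition mono_map := mmap (@mpolyC l R) (fun j => 'X_[e j]).
HB.instance Definition _ := GRing.RMorphism.on mono_map.

Lemma mono_mapX m : mono_map 'X_[m] = 'X_[mlin m].
Proof. by rewrite /mono_map mmapX /mmap1 mprodXnE. Qed.

Lemma mcoeff_mono_map p u :
  (mono_map p)@_u = \sum_(m <- msupp p) p@_m * (mlin m == u)%:R.
Proof.
rewrite /mono_map /mmap raddf_sum /=; apply: eq_bigr => m _.
by rewrite /mmap1 mprodXnE mcoeffCM mcoeffX.
Qed.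

Lemma mono_map_fiber_sum p (rep : 'X_{1..k} -> 'X_{1..k}) :
    mono_map p = 0 ->
    {in msupp p, forall m, mlin (rep m) = mlin m} ->
    (forall m m', mlin m = mlin m' -> rep m = rep m') ->
  \sum_(m <- msupp p) p@_m *: 'X_[rep m] = 0.
Proof.
move=> p0 repP rep_fiber; apply/mpolyP => u; rewrite mcoeff0 raddf_sum /=.
rewrite big_seq; under eq_bigr => m _ do rewrite mcoeffZ mcoeffX.
case: (boolP (has (fun m => rep m == u) (msupp p))) => [/hasP[m0 m0p /eqP rep0]|none].
  rewrite -[RHS](mcoeff0 _ (mlin m0)) -p0 mcoeff_mono_map big_seq.
  apply: eq_bigr => m mp; congr (_ * (nat_of_bool _)%:R).
  apply/idP/idP => [/eqP repm|/eqP/rep_fiber ->]; last by rewrite rep0.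
  by rewrite -(repP m) // repm -rep0 repP.
rewrite big1 // => m mp; case: eqP => [repu|]; last by rewrite mulr0.
by move/hasPn: none => /(_ m mp); rewrite repu eqxx.
Qed.

Section Kernel.
Variable G : {mpoly R[k]} -> Prop.

Lemma mono_map_in_ideal : (forall x, G x -> mono_map x = 0) ->
  forall p, in_ideal G p -> mono_map p = 0.
Proof.
move=> G0 p [s [Gs ->]]; rewrite raddf_sum big_seq /=; apply: big1 => x xs.
by rewrite rmorphM /= (G0 x.2) ?mulr0 //; exact: Gs.
Qed.

Lemma in_ideal_mono_map_ker :
    (forall m m', mlin m = mlin m' -> in_ideal G ('X_[m] - 'X_[m'])) ->
  forall p, mono_map p = 0 -> in_ideal G p.
Proof.
(* [p] minus binomials is [\sum p_m x^(rep m)], with [rep m] a representative of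
   the fiber of [mlin] through [m]; its coefficients are those of [mono_map p]. *)
move=> binomial p p0; set s := msupp p.
pose rep m := nth 0%MM s (find (fun m' => mlin m' == mlin m) s).
have repP : {in s, forall m, mlin (rep m) = mlin m}.
  move=> m ms; have hs : has (fun m' => mlin m' == mlin m) s by apply/hasP; exists m.
  exact/eqP/(nth_find 0%MM hs).
have rep_fiber m m' : mlin m = mlin m' -> rep m = rep m' by rewrite /rep => ->.
have -> : p = \sum_(m <- s) p@_m *: ('X_[m] - 'X_[rep m]) + \sum_(m <- s) p@_m *: 'X_[rep m].
  rewrite -big_split /= {1}(mpolyE p); apply: eq_bigr => m _.
  by rewrite -scalerDr subrK.
rewrite mono_map_fiber_sum // addr0 big_seq.
apply: (big_ind (in_ideal G)); [exact: in_ideal0 | exact: in_idealD |].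
by move=> m ms; rewrite -mul_mpolyC; apply/in_idealMl/binomial; rewrite repP.
Qed.

Hypothesis e_neq0 : forall j, e j != 0%MM.
Hypothesis exchange : forall j m m', mlin (m + U_(j))%MM = mlin m' ->
  exists m'', [/\ in_ideal G ('X_[m'] - 'X_[m'']), mlin m'' = mlin m' & (0 < m'' j)%N].

Lemma mlin_eq0 m : mlin m = 0%MM -> m = 0%MM.
Proof.
move=> m0; apply/mnmP => j; rewrite mnm0E; case: (posnP (m j)) => // mj.
have [u eu] := mnm_neq0_gt0 (e_neq0 j).
by have := leq_mlin m j u; rewrite m0 mnm0E leqn0 muln_eq0 !eqn0Ngt eu mj.
Qed.

Lemma binomial_in_ideal m m' : mlin m = mlin m' -> in_ideal G ('X_[m] - 'X_[m']).
Proof.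
elim: {m}(mdeg m) {-2}m (erefl (mdeg m)) m' => [|d IH] m dm m' mm'.
  have m0 : m = 0%MM by apply/eqP; rewrite -mdeg_eq0 dm.
  have m'0 : m' = 0%MM by apply: mlin_eq0; rewrite -mm' m0 mlin0.
  by rewrite m0 m'0 subrr; apply: in_ideal0.
have [j mj] : exists j, (0 < m j)%N by apply: mnm_neq0_gt0; rewrite -mdeg_eq0 dm.
set m1 := (m - U_(j))%MM; have em : m = (m1 + U_(j))%MM by rewrite submK // lep1mP -lt0n.
have [m'' [Im'm'' m''m' m''j]] := exchange (etrans (congr1 mlin (esym em)) mm').
set m1'' := (m'' - U_(j))%MM.
have em'' : m'' = (m1'' + U_(j))%MM by rewrite submK // lep1mP -lt0n.
have Im1 : in_ideal G ('X_[m1] - 'X_[m1'']).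
  apply: IH; first by move: dm; rewrite em mdegD mdeg1 addn1 => -[].
  by apply: (@addIm _ (e j)); rewrite -mlinU -!mlinD -em -em'' m''m' mm'.
have -> : 'X_[m] - 'X_[m'] =
    ('X_[m1] - 'X_[m1'']) * 'X_[U_(j)] - ('X_[m'] - 'X_[m'']) :> {mpoly R[k]}.
  by rewrite mulrBl -!mpolyXD -em -em'' opprB addrA subrK.
by apply: in_idealB => //; rewrite mulrC; apply: in_idealMl.
Qed.
End Kernel.
End MonomialMap.

Section Grid.
Variables (n : nat) (r : 'I_n -> nat).
Local Notation N := (Ngrid r).
Implicit Types (a b c w x y z : N) (T : {set N}) (i : 'I_n).

Lemma swE i a b j : sw i a b j = if j == i then b j else a j.
Proof. by rewrite ffunE. Qed.

Lemma sw_id i a : sw i a a = a.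
Proof. by apply/ffunP => j; rewrite swE if_same. Qed.

Lemma sw_eq_self i a b : a i = b i -> sw i a b = a.
Proof. by move=> ab; apply/ffunP => j; rewrite swE; case: eqP => // ->. Qed.

Lemma sw_swr i a b c : sw i a (sw i b c) = sw i a c.
Proof. by apply/ffunP => j; rewrite !swE; case: eqP => // ->; rewrite swE eqxx. Qed.

Lemma dist_sym a b : dist a b = dist b a.
Proof. by apply: eq_card => j; rewrite !inE eq_sym. Qed.

Lemma leq_dist_sw i w y z : (dist (sw i y w) (sw i z w) <= dist y z)%N.
Proof.
apply: subset_leq_card; apply/subsetP => j; rewrite !inE !swE.
by case: (j == i); rewrite ?eqxx.
Qed.

Lemma adjT_sym T : ssrbool.symmetric (adjT T).
Proof. by move=> x y; rewrite /adjT dist_sym andbCA. Qed.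

Variables (t : nat) (T : {set N}).
Hypothesis hT : switchable t T.

(* Either [z] agrees with [y] off [i], and then [sw i z w = sw i y w], or they
   differ at exactly one [j != i], and then [dist z (sw i y w) = 2]. *)
Lemma switchable_adj_sw i w y z :
  (i < t)%N -> adjT T y z -> sw i y w \in T -> sw i z w \in T.
Proof.
move=> ti /and3P[_ zT dyz] ywT.
have [ziw|ziw] := eqVneq (z i) (w i); first by rewrite sw_eq_self.
have [j /andP[ji zyj]|same] := pickP (fun j => (j != i) && (z j != y j)); last first.
  suff -> : sw i z w = sw i y w by [].
  apply/ffunP => k; rewrite !swE; case: eqP => // /eqP ki.
  by move: (same k); rewrite /= ki => /negbFE/eqP.
have Dyz : [set k | y k != z k] = [set j].
  apply/eqP; rewrite eq_sym eqEcard sub1set inE eq_sym zyj cards1 /=; exact: dyz.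
have Dz : [set k | z k != sw i y w k] = [set i; j].
  apply/setP => k; rewrite !inE swE.
  have [->|ki] := eqVneq k i; first by rewrite ziw.
  by move/setP: Dyz => /(_ k); rewrite !inE eq_sym.
have dz2 : dist z (sw i y w) = 2 by rewrite /dist Dz cards2 eq_sym ji.
by have := hT zT ywT dz2 ti; rewrite sw_swr.
Qed.

Variable a0 : N.
Local Notation S := [set b | connectedIn T a0 b].

Lemma mem_classT b : b \in S -> b \in T.
Proof. by rewrite inE => /and3P[]. Qed.

Lemma mem_class_adj x y : x \in S -> adjT T x y -> y \in S.
Proof.
rewrite !inE /connectedIn => /and3P[-> _ a0x] xy.
by have /and3P[_ -> _] := xy; exact: connect_trans a0x (connect1 xy).
Qed.

Lemma class_connect x y : x \in S -> y \in S -> connect (adjT T) x y.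
Proof.
rewrite !inE => /and3P[_ _ a0x] /and3P[_ _ a0y].
by apply: connect_trans a0y; rewrite (sym_connect_sym (@adjT_sym T)).
Qed.

Lemma class_sw_stable i w c x :
  (i < t)%N -> c \in S -> sw i c w \in S -> x \in S -> sw i x w \in S.
Proof.
move=> ti cS cwS xS; have /connectP[p cp ->] := class_connect cS xS.
elim: p c cS cwS cp {xS} => [|z p IH] y //= yS ywS /andP[yz zp].
apply: (IH z) => //; first exact: mem_class_adj yz.
have ywT := mem_classT ywS.
apply: mem_class_adj ywS _; rewrite /adjT ywT (switchable_adj_sw ti yz ywT) /=.
by apply: leq_trans (leq_dist_sw _ _ _ _) _; case/and3P: yz.
Qed.

Lemma mem_class_sw i a b : (i < t)%N -> a \in S -> b \in S -> sw i a b \in S.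
Proof. by move=> ti aS bS; apply: (class_sw_stable ti bS) => //; rewrite sw_id. Qed.

Lemma class_connectedIn b c : b \in S -> c \in S -> connectedIn S b c.
Proof.
move=> bS cS; rewrite /connectedIn bS cS /=.
have /connectP[p bp ->] := class_connect bS cS; apply/connectP; exists p => //.
elim: p b bS bp {cS} => [|z p IH] x //= xS /andP[xz zp].
have zS := mem_class_adj xS xz.
by rewrite IH // andbT /adjT xS zS; case/and3P: xz.
Qed.

End Grid.

Section ToricMap.
Variables (n : nat) (r : 'I_n -> nat) (t : nat) (S : {set Ngrid r}).
Local Notation N := (Ngrid r).
Implicit Types (a b c : N) (i : 'I_n).

Definition partial_point := {dffun forall j : 'I_n, option 'I_(r j)}.

(* [inl (inl a)] is a free variable for each [a] outside [S]; [inl (inr p)]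
   with [p = coord_at i a] stands for the pair [(i, a i)] with [i < t]; and
   [inr p] with [p = drop_coords a] for the coordinates of [a] beyond [t]. *)
Definition toric_var := ((N + partial_point) + partial_point)%type.

Definition coord_at i a : partial_point :=
  [ffun j => if j == i then Some (a j) else None].

Definition drop_coords a : partial_point :=
  [ffun j : 'I_n => if (j < t)%N then None else Some (a j)].

Definition tvar (u : toric_var) : 'X_{1..#|{: toric_var}|} := U_(enum_rank u)%MM.

Definition toric_mono a : 'X_{1..#|{: toric_var}|} :=
  if a \in S then
    (tvar (inr (drop_coords a)) +
       \sum_(i < n | (i < t)%N) tvar (inl (inr (coord_at i a))))%MM
  else tvar (inl (inl a)).

Definition toric_exp (j : 'I_#|{: N}|) := toric_mono (enum_val j).

Lemma tvarE u u' : tvar u (enum_rank u') = (u == u').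
Proof. by rewrite mnm1E (inj_eq enum_rank_inj). Qed.

Lemma toric_monoE a u : toric_mono a (enum_rank u) =
  if a \in S then
    ((inr (drop_coords a) == u) +
       \sum_(i < n | (i < t)%N) (inl (inr (coord_at i a)) == u))%N
  else (inl (inl a) == u) :> nat.
Proof.
rewrite /toric_mono; case: ifP => _; last exact: tvarE.
by rewrite mnmDE mnm_sumE tvarE; congr (_ + _)%N; apply: eq_bigr => i _; rewrite tvarE.
Qed.

Lemma coord_at_eq i i' a b : (coord_at i a == coord_at i' b) = (i == i') && (a i == b i).
Proof.
apply/eqP/andP => [/ffunP/(_ i)|[/eqP <- /eqP ab]].
  by rewrite !ffunE eqxx; case: (eqVneq i i') => // _ [->].
by apply/ffunP => j; rewrite !ffunE; case: eqP => // ->; rewrite ab.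
Qed.

Lemma toric_mono_free a x :
  toric_mono a (enum_rank (inl (inl x) : toric_var)) = (a \notin S) && (a == x).
Proof. by rewrite toric_monoE; case: ifP => //= _; rewrite big1. Qed.

Lemma toric_mono_coord i a b : (i < t)%N ->
  toric_mono a (enum_rank (inl (inr (coord_at i b)) : toric_var)) = (a \in S) && (a i == b i).
Proof.
move=> ti; rewrite toric_monoE; case: ifP => //= _.
rewrite (bigD1 i) //= big1 => [|i' /andP[_ i'i]].
  by rewrite [_ == _]coord_at_eq eqxx addn0.
by rewrite [_ == _]coord_at_eq (negbTE i'i).
Qed.

Lemma toric_mono_drop a b :
  toric_mono a (enum_rank (inr (drop_coords b) : toric_var)) =
    (a \in S) && (drop_coords a == drop_coords b).
Proof. by rewrite toric_monoE; case: ifP => //= _; rewrite big1 ?addn0. Qed.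

Lemma toric_mono_neq0 a : toric_mono a != 0%MM.
Proof.
apply/negP => /eqP a0.
pose u : toric_var := if a \in S then inr (drop_coords a) else inl (inl a).
have := congr1 (fun m : 'X_{1..#|{: toric_var}|} => m (enum_rank u)) a0.
by rewrite /= mnm0E /u; case: ifP => aS; rewrite ?toric_mono_free ?toric_mono_drop aS eqxx.
Qed.

Lemma drop_coords_sw i a b : (i < t)%N -> drop_coords (sw i a b) = drop_coords a.
Proof.
move=> ti; apply/ffunP => j; rewrite !ffunE; case: ltnP => // tj.
by case: eqP => // ji; move: tj; rewrite ji leqNgt ti.
Qed.

Lemma coord_at_sw i i' a b :
  coord_at i' (sw i a b) = if i' == i then coord_at i' b else coord_at i' a.
Proof.
apply/ffunP => j; have [->|i'i] := eqVneq i' i; rewrite !ffunE; case: eqP => // ->.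
by rewrite (negbTE i'i).
Qed.

Lemma toric_mono_sw i b c : (i < t)%N -> b \in S -> c \in S ->
    sw i b c \in S -> sw i c b \in S ->
  (toric_mono b + toric_mono c)%MM = (toric_mono (sw i b c) + toric_mono (sw i c b))%MM.
Proof.
move=> ti bS cS bcS cbS; rewrite /toric_mono bS cS bcS cbS !drop_coords_sw //.
set yb := (\sum_(i' < n | _) _)%MM; set yc := (\sum_(i' < n | _) _)%MM.
set yb' := (\sum_(i' < n | _) _)%MM; set yc' := (\sum_(i' < n | _) _)%MM.
have ysw : (yb + yc)%MM = (yb' + yc')%MM.
  rewrite -!big_split; apply: eq_bigr => i' _ /=; rewrite !coord_at_sw.
  by case: eqP => _ //; rewrite addmC.
apply/mnmP => u; move/mnmP: ysw => /(_ u); rewrite !mnmDE => ysw.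
by rewrite addnACA ysw addnACA.
Qed.
End ToricMap.

Section ClassIdeal.
Variables (K : fieldType) (n : nat) (r : 'I_n -> nat) (t : nat).
Variables (T : {set Ngrid r}) (a0 : Ngrid r).
Hypothesis hT : switchable t T.
Local Notation N := (Ngrid r).
Local Notation S := [set b | connectedIn T a0 b].
Local Notation I := (in_ideal (@gensIS K n r t S)).
Local Notation rk := (@enum_rank N).
Local Notation mono := (toric_mono t S).
Local Notation mlin := (mlin (toric_exp t S)).
Local Notation phi := (@mono_map K _ _ (toric_exp t S)).
Implicit Types (a b c : N) (i : 'I_n) (m : 'X_{1..#|{: N}|}).

Lemma mlinU_rank a : mlin U_(rk a)%MM = mono a.
Proof. by rewrite mlinU /toric_exp enum_rankK. Qed.

Lemma mono_fgen i a b : (i < t)%N -> a \in S -> b \in S ->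
  phi (fgen K i a b) = 0.
Proof.
move=> ti aS bS; rewrite /fgen /xv -!mpolyXD rmorphB /= !mono_mapX !mlinD !mlinU_rank.
have abS := mem_class_sw hT ti aS bS; have baS := mem_class_sw hT ti bS aS.
by rewrite (toric_mono_sw ti aS bS abS baS) subrr.
Qed.

Lemma swap_step i b c m : (i < t)%N -> b \in S -> c \in S ->
    (U_(rk b) + U_(rk c) <= m)%MM ->
  exists m', [/\ I ('X_[m] - 'X_[m']), mlin m' = mlin m & (0 < m' (rk (sw i b c)))%N].
Proof.
move=> ti bS cS bc_m; set m2 := (m - (U_(rk b) + U_(rk c)))%MM.
exists (m2 + (U_(rk (sw i b c)) + U_(rk (sw i c b))))%MM; split.
- rewrite -(submK bc_m) !mpolyXD -mulrBr; apply/in_idealMl/in_ideal_gen.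
  by exists i, b, c; split=> //; apply: class_connectedIn.
- have bcS := mem_class_sw hT ti bS cS; have cbS := mem_class_sw hT ti cS bS.
  by rewrite -(submK bc_m) !mlinD !mlinU_rank (toric_mono_sw ti bS cS bcS cbS).
- by rewrite !mnmDE mnm1E eqxx addnCA.
Qed.

(* Induction on the number of [i < t] with [b i != a i]: swapping [b] with a
   point [c] of the support having [c i = a i] repairs coordinate [i]. *)
Lemma class_walk a m1 : a \in S -> forall b m,
    drop_coords t b = drop_coords t a -> b \in S -> (0 < m (rk b))%N ->
    mlin (m1 + U_(rk a))%MM = mlin m ->
  exists m', [/\ I ('X_[m] - 'X_[m']), mlin m' = mlin m & (0 < m' (rk a))%N].
Proof.
move=> aS b m; set D := fun x : N => [set i : 'I_n | (i < t)%N && (x i != a i)].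
move: {2}#|D b| (erefl #|D b|) => d.
elim: d b m => [|d IH] b m Db db bS mb mm.
  suff <- : b = a by exists m; split=> //; rewrite subrr; apply: in_ideal0.
  apply/ffunP => j; case: (ltnP j t) => tj.
    by move/eqP: Db; rewrite cards_eq0 => /eqP/setP/(_ j); rewrite !inE tj => /negbFE/eqP.
  by move/ffunP: db => /(_ j); rewrite !ffunE ltnNge tj => -[].
have [i iD] : exists i, i \in D b by apply/set0Pn; rewrite -card_gt0 Db.
have /andP[ti bai] : (i < t)%N && (b i != a i) by rewrite inE in iD.
have : (0 < mlin m (enum_rank (inl (inr (coord_at i a)) : toric_var r)))%N.
  by rewrite -mm mlinD mnmDE mlinU_rank toric_mono_coord // aS eqxx addn1.
case/mlin_gt0 => j mj; rewrite /toric_exp toric_mono_coord // lt0b => /andP[cS /eqP cai].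
set c := enum_val j in cS cai; have rc : rk c = j by rewrite /c enum_valK.
have bc_m : (U_(rk b) + U_(rk c) <= m)%MM.
  have bj : rk b != j by apply: contraNneq bai => bj; rewrite -cai /c -bj enum_rankK.
  apply/mnm_lepP => u; rewrite mnmDE !mnm1E rc.
  have [<-|_] := eqVneq (rk b) u; last by case: eqP => // <-.
  by rewrite eq_sym (negbTE bj) addn0.
have [m3 [Im3 m3m m3b]] := swap_step ti bS cS bc_m.
have Dbc : #|D (sw i b c)| = d.
  suff -> : D (sw i b c) = D b :\ i by move: Db; rewrite (cardsD1 i) iD => -[].
  apply/setP => k; rewrite !inE swE; have [->|//] := eqVneq k i.
  by rewrite cai eqxx andbF.
have [m' [Im3m' m'm3 m'a]] :=
  IH _ m3 Dbc (etrans (drop_coords_sw _ _ ti) db) (mem_class_sw hT ti bS cS) m3b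
    (etrans mm (esym m3m)).
exists m'; split=> //; last by rewrite m'm3.
by rewrite -[_ - _](subrKA ('X_[m3])); apply: in_idealD.
Qed.

Lemma class_exchange j m1 m : mlin (m1 + U_(j))%MM = mlin m ->
  exists m', [/\ I ('X_[m] - 'X_[m']), mlin m' = mlin m & (0 < m' j)%N].
Proof.
rewrite -[j]enum_valK; set a := enum_val j => mm.
have [aS|aNS] := boolP (a \in S).
  have : (0 < mlin m (enum_rank (inr (drop_coords t a) : toric_var r)))%N.
    by rewrite -mm mlinD mnmDE mlinU_rank toric_mono_drop aS eqxx addn1.
  case/mlin_gt0 => j' mj'; rewrite /toric_exp toric_mono_drop lt0b => /andP[bS /eqP db].
  by apply: (class_walk aS db bS _ mm); rewrite enum_valK.
have : (0 < mlin m (enum_rank (inl (inl a) : toric_var r)))%N.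
  by rewrite -mm mlinD mnmDE mlinU_rank toric_mono_free aNS eqxx addn1.
case/mlin_gt0 => j' mj'; rewrite /toric_exp toric_mono_free lt0b => /andP[_ /eqP ja].
exists m; split=> //; first by rewrite subrr; apply: in_ideal0.
by rewrite -ja enum_valK.
Qed.

Lemma in_ideal_toricE p : I p <-> phi p = 0.
Proof.
split.
  apply: mono_map_in_ideal => _ [i [a [b [ti /and3P[aS bS _] ->]]]].
  exact: mono_fgen.
apply: in_ideal_mono_map_ker => m m'; apply: binomial_in_ideal.
  by move=> j; apply: toric_mono_neq0.
exact: class_exchange.
Qed.

End ClassIdeal.

Theorem theorem4p3 (K : fieldType) (n : nat) (r : 'I_n -> nat)
  (hr : forall i, (0 < r i)%N) (t : nat) (ht : (1 <= t <= n)%N)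
  (T S : {set Ngrid r}) (hT : switchable t T) (hS : conn_class T S) :
  prime_ideal (in_ideal (@gensIS K n r t S)).
Proof.
case: hS => a0 _ ->.
exact: kernel_prime_ideal (in_ideal_toricE a0 hT).
Qed.
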